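(* There is an absolute constant $c>0$ such that the following holds. Let $\mathcal{F}$ be a finite class of functions $\mathcal{S}\times\mathcal{A}\to[0,V_{\max}]$ and $\Pi$ a finite class of policies. Suppose that for every $\pi\in\Pi$: (i) $\mathcal{T}^\pi f\in\mathcal{F}$ for all $f\in\mathcal{F}$, and (ii) $C_\pi:=\|d^\pi/d^D\|_\infty<\infty$. Let $\mathcal{D}$ consist of $n$ i.i.d. samples from $D$, and for each $\pi\in\Pi$ let $\hat f^\pi\in\arg\min_{f\in\mathcal{F}}\widehat{\mathcal{E}}(f;\pi)$. Let $\hat\pi\in\arg\max_{\pi\in\Pi}J_{\hat f^\pi}(\pi)$. Then for any $\delta\in(0,1)$, with probability at least $1-\delta$, for every $\pi_{\mathrm{cp}}\in\Pi$, $$J(\pi_{\mathrm{cp}})-J(\hat\pi)\le c\,\frac{V_{\max}}{1-\gamma}\sqrt{\frac{(\max_{\pi\in\Pi}C_\pi)\log(|\mathcal{F}||\Pi|/\delta)}{n}}.$$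
   Context: MDP $(\mathcal{S},\mathcal{A},P,R,\gamma,d_0)$ with finite $\mathcal{S},\mathcal{A}$, deterministic reward $R:\mathcal{S}\times\mathcal{A}\to[0,R_{\max}]$, $\gamma\in[0,1)$, $V_{\max}=R_{\max}/(1-\gamma)$. For a policy $\pi$: $J(\pi)=\mathbb{E}_\pi[\sum_t\gamma^tr_t]$; $f(s,\pi)=\sum_a\pi(a\mid s)f(s,a)$; $J_f(\pi)=\mathbb{E}_{s\sim d_0}[f(s,\pi)]$; $(\mathcal{T}^\pi f)(s,a)=R(s,a)+\gamma\mathbb{E}_{s'\sim P(\cdot\mid s,a)}[f(s',\pi)]$; $d^\pi(s,a)=(1-\gamma)\sum_{t\ge0}\gamma^t\Pr_\pi[s_t=s,a_t=a]$. Data distribution $d^D\in\Delta(\mathcal{S}\times\mathcal{A})$; $D$ is the distribution of $(s,a,r,s')$ with $(s,a)\sim d^D$, $r=R(s,a)$, $s'\sim P(\cdot\mid s,a)$. $\|d^\pi/d^D\|_\infty=\max_{s,a}d^\pi(s,a)/d^D(s,a)$ ($0/0=0$, nonzero$/0=\infty$). Empirical losses on dataset $\mathcal{D}$: $\widehat{\mathcal{L}}(f';f,\pi)=\frac{1}{|\mathcal{D}|}\sum_{(s,a,r,s')\in\mathcal{D}}(f'(s,a)-r-\gamma f(s',\pi))^2$ and $\widehat{\mathcal{E}}(f;\pi)=\max_{g\in\mathcal{F}}\big[\widehat{\mathcal{L}}(f;f,\pi)-\widehat{\mathcal{L}}(g;f,\pi)\big]$. Ties in argmin/argmax are broken arbitrarily.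 *)

From mathcomp Require Import all_boot all_order all_algebra.
From mathcomp Require Import all_classical all_reals.
From mathcomp Require Import topology normedtype sequences exp.
Set Implicit Arguments. Unset Strict Implicit. Unset Printing Implicit Defensive.
Import Order.TTheory GRing.Theory Num.Theory.
Import numFieldNormedType.Exports.
Local Open Scope ring_scope.

(* A (stationary, stochastic) policy is
   pi : {ffun S * A -> R} with pi (s,a) = pi(a|s).  Transition P s a s' = P(s'|s,a). *)

Section MDP.
Variables (R : realType) (S A : finType).

Definition is_distr (T : finType) (p : T -> R) : Prop :=
  (forall x, 0 <= p x) /\ \sum_(x : T) p x = 1.

Definition is_policy (pi : {ffun S * A -> R}) : Prop :=
  forall s, is_distr (fun a => pi (s, a)).

Definition fpol (f pi : {ffun S * A -> R}) (s : S) : R :=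
  \sum_(a : A) pi (s, a) * f (s, a).

Definition Jf (d0 : S -> R) (f pi : {ffun S * A -> R}) : R :=
  \sum_(s : S) d0 s * fpol f pi s.

Definition bellman (Rw : S -> A -> R) (P : S -> A -> S -> R) (gamma : R)
  (pi f : {ffun S * A -> R}) : {ffun S * A -> R} :=
  [ffun sa => Rw sa.1 sa.2 + gamma * \sum_(s' : S) P sa.1 sa.2 s' * fpol f pi s'].

Fixpoint state_distr (P : S -> A -> S -> R) (d0 : S -> R)
  (pi : {ffun S * A -> R}) (t : nat) : S -> R :=
  match t with
  | 0 => d0
  | t'.+1 => fun s' => \sum_(s : S) \sum_(a : A)
              state_distr P d0 pi t' s * pi (s, a) * P s a s'
  end.

Definition sa_distr P d0 pi t (sa : S * A) : R :=
  state_distr P d0 pi t sa.1 * pi sa.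

(* J(pi) = E_pi[ sum_t gamma^t r_t ] = sum_t gamma^t E_pi[r_t] *)
Definition Jret (Rw : S -> A -> R) P d0 (gamma : R) pi : R :=
  limn (series (fun t => gamma ^+ t *
     \sum_(sa : S * A) sa_distr P d0 pi t sa * Rw sa.1 sa.2)).

Definition occupancy P d0 (gamma : R) pi (sa : S * A) : R :=
  (1 - gamma) * limn (series (fun t => gamma ^+ t * sa_distr P d0 pi t sa)).

(* ||d^pi / d^D||_inf with 0/0 = 0 and nonzero/0 = +oo *)
Definition conc_coef P d0 gamma pi (dD : S * A -> R) : \bar R :=
  if [forall sa, (dD sa == 0) ==> (occupancy P d0 gamma pi sa == 0)]
  then (\big[Num.max/0]_(sa : S * A) (occupancy P d0 gamma pi sa / dD sa))%:E
  else +oo%E.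

(* Datasets of n transitions (s, a, s'); the reward r = R(s,a) is deterministic *)
Definition dataset (n : nat) := {ffun 'I_n -> (S * A * S)%type}.

Definition data_prob (P : S -> A -> S -> R) (dD : S * A -> R) n (x : dataset n) : R :=
  \prod_(i < n) (dD ((x i).1.1, (x i).1.2) * P (x i).1.1 (x i).1.2 (x i).2).

Definition emp_loss (Rw : S -> A -> R) (gamma : R) n (x : dataset n)
  (f' f pi : {ffun S * A -> R}) : R :=
  n%:R^-1 * \sum_(i < n)
    (f' ((x i).1.1, (x i).1.2) - Rw (x i).1.1 (x i).1.2
       - gamma * fpol f pi (x i).2) ^+ 2.

Definition emp_err Rw gamma n (x : dataset n) (F : seq {ffun S * A -> R})
  (f pi : {ffun S * A -> R}) : R :=
  \big[Num.max/0]_(g <- F)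
     (emp_loss Rw gamma x f f pi - emp_loss Rw gamma x g f pi).

End MDP.

From mathcomp Require Import all_boot all_order all_algebra.
From mathcomp Require Import all_classical all_reals.
From mathcomp Require Import topology normedtype sequences exp.
From mathcomp Require Import ring lra.
Import Order.TTheory GRing.Theory Num.Theory.
Import numFieldNormedType.Exports.
Local Open Scope classical_set_scope.
Local Open Scope ring_scope.

(* The excess squared loss of any [h] over the backup [T^pi f] has mean
   [||h - T^pi f||^2_{d^D}] and second moment at most [4 V^2] times that mean,
   so a Bernstein-type Chernoff bound and a union bound over [Pi x F x F] put
   every empirical excess loss above half its mean minus [K = 16 V^2 L / n].
   On that event the fixed point [Q^pi] of [T^pi], which lies in [F] since
   [F] is finite and closed under the contraction [T^pi], has empirical error
   at most [K], hence so does the minimiser [fhat^pi], which forces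
   [||fhat^pi - T^pi fhat^pi||^2_{d^D} <= 4 K].  The performance difference
   lemma, Cauchy-Schwarz and [d^pi <= C_pi d^D] turn this into
   [|J_{fhat^pi}(pi) - J(pi)| <= E] for every [pi \in Pi], and maximising
   [J_{fhat^pi}(pi)] over [Pi] loses at most [2 E]. *)

Section Chernoff.
Context {R : realType}.

Lemma expR_le_1DxDsqr (y : R) : y <= 1 / 2 -> expR y <= 1 + y + 2 * y ^+ 2.
Proof.
move=> hy; have hp : 0 < 1 - y by lra.
have e1 : expR y <= (1 - y)^-1.
  rewrite -[expR y]invrK -expRN lef_pV2 ?posrE ?expR_gt0 //.
  by have := expR_ge1Dx (- y); rewrite addrC.
apply: (le_trans e1); rewrite -[X in X <= _]mul1r ler_pdivrMr //.
have -> : (1 + y + 2 * y ^+ 2) * (1 - y) = 1 + y ^+ 2 * (1 - 2 * y).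
  by rewrite !expr2; ring.
by rewrite lerDl mulr_ge0 ?sqr_ge0 //; lra.
Qed.

Lemma sum_ffun_prod (Z : finType) (n : nat) (G : Z -> R) :
  \sum_(x : {ffun 'I_n -> Z}) \prod_i G (x i) = (\sum_z G z) ^+ n.
Proof.
have := bigA_distr_bigA (fun (_ : 'I_n) (z : Z) => G z).
by move=> /= <-; rewrite prodr_const card_ord.
Qed.

Section Bernstein.
Context {Z : finType} {w X : Z -> R} {B : R}.
Hypotheses (w_ge0 : forall z, 0 <= w z) (sum_w : \sum_z w z = 1) (B_gt0 : 0 < B)
  (X_ge : forall z, - B <= X z)
  (X_var_le : \sum_z w z * X z ^+ 2 <= 4 * B * \sum_z w z * X z).

Let mu := \sum_z w z * X z.

Lemma mgf_opp_le (lam : R) : 0 <= lam -> 16 * lam * B <= 1 ->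
  \sum_z w z * expR (- lam * X z) <= expR (- (lam * mu / 2)).
Proof.
move=> lam0 lamB.
have mu0 : 0 <= mu.
  have : 0 <= 4 * B * mu.
    by apply: le_trans X_var_le; apply: sumr_ge0 => z _; rewrite mulr_ge0 ?sqr_ge0.
  by rewrite pmulr_rge0 // mulr_gt0.
apply: le_trans (expR_ge1Dx _); rewrite addrC.
apply: (@le_trans _ _ (\sum_z w z * (1 + (- lam * X z) + 2 * (- lam * X z) ^+ 2))).
  apply: ler_sum => z _; apply: ler_wpM2l => //; apply: expR_le_1DxDsqr.
  have := X_ge z; nra.
have -> : \sum_z w z * (1 + - lam * X z + 2 * (- lam * X z) ^+ 2) =
    \sum_z w z - lam * mu + 2 * lam ^+ 2 * \sum_z w z * X z ^+ 2.
  rewrite /mu mulr_sumr mulr_sumr -sumrN -!big_split /=.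
  by apply: eq_bigr => z _; rewrite !expr2; ring.
have : 2 * lam ^+ 2 * \sum_z w z * X z ^+ 2 <= 2 * lam ^+ 2 * (4 * B * mu).
  by apply: ler_wpM2l => //; rewrite mulr_ge0 ?sqr_ge0.
have : 0 <= lam * mu by rewrite mulr_ge0.
rewrite sum_w !expr2; nra.
Qed.

(* Exponential Markov inequality with [lam = 1 / (16 B)]. *)
Lemma chernoff_lower_tail (n : nat) (L : R) :
  \sum_(x : {ffun 'I_n -> Z} | \sum_i X (x i) < n%:R * mu / 2 - 16 * B * L)
     \prod_i w (x i) <= expR (- L).
Proof.
set lam := (16 * B)^-1.
have lam0 : 0 < lam by rewrite invr_gt0 mulr_gt0.
have lamB : 16 * lam * B = 1 by rewrite mulrAC mulfV // gt_eqF // mulr_gt0.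
pose Phi (x : {ffun 'I_n -> Z}) :=
  \prod_i (w (x i) * expR (- lam * X (x i))) * expR (lam * n%:R * mu / 2 - L).
have Phi_ge0 x : 0 <= Phi x.
  by rewrite mulr_ge0 ?expR_ge0 // prodr_ge0 // => i _; rewrite mulr_ge0 ?expR_ge0.
have tail_le_Phi (x : {ffun 'I_n -> Z}) : \sum_i X (x i) < n%:R * mu / 2 - 16 * B * L ->
    \prod_i w (x i) <= Phi x.
  move=> hx; rewrite /Phi big_split /= -expR_sum -(mulrA (\prod_i w (x i))) -expRD.
  rewrite -[X in X <= _]mulr1 ler_wpM2l ?prodr_ge0 //.
  apply: le_trans (expR_ge1Dx _); rewrite lerDl.
  have -> : \sum_i - lam * X (x i) = - (lam * \sum_i X (x i)).
    by rewrite mulr_sumr -sumrN; apply: eq_bigr => i _; rewrite mulNr.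
  have : lam * \sum_i X (x i) < lam * (n%:R * mu / 2 - 16 * B * L) by rewrite ltr_pM2l.
  have -> : lam * (n%:R * mu / 2 - 16 * B * L) = lam * n%:R * mu / 2 - L.
    by rewrite mulrBr !mulrA [lam * 16]mulrC lamB mul1r.
  lra.
apply: (@le_trans _ _ (\sum_x Phi x)).
  rewrite [X in _ <= X](bigID (fun x : {ffun 'I_n -> Z} =>
     \sum_i X (x i) < n%:R * mu / 2 - 16 * B * L)) /=.
  by rewrite -[X in X <= _]addr0 lerD ?ler_sum ?sumr_ge0.
rewrite /Phi -mulr_suml (@sum_ffun_prod Z n (fun z => w z * expR (- lam * X z))).
apply: le_trans (_ : expR (- (lam * mu / 2)) ^+ n * expR (lam * n%:R * mu / 2 - L) <= _).
  rewrite ler_wpM2r ?expR_ge0 // lerXn2r ?nnegrE ?expR_ge0 ?sumr_ge0 //.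
    by move=> z _; rewrite mulr_ge0 ?expR_ge0.
  by apply: mgf_opp_le; [exact: ltW | rewrite lamB].
rewrite -expRM_natl -expRD.
by have -> : n%:R * - (lam * mu / 2) + (lam * n%:R * mu / 2 - L) = - L by ring.
Qed.

End Bernstein.
End Chernoff.

Lemma sum_pair {R : realType} {I J : finType} (F : I * J -> R) :
  \sum_(p : I * J) F p = \sum_i \sum_j F (i, j).
Proof.
rewrite (pair_big xpredT xpredT (fun i j => F (i, j))) /=.
by apply: eq_bigr => -[i j].
Qed.

Section Occupancy.
Context {R : realType} {S A : finType} (Rw : S -> A -> R)
  {P : S -> A -> S -> R} {d0 : S -> R} {gamma : R} { pi : {ffun S * A -> R} }.
Hypotheses (HP : forall s a, is_distr (P s a)) (Hd0 : is_distr d0)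
  (Hpi : is_policy pi) (gamma_ge0 : 0 <= gamma) (gamma_lt1 : gamma < 1).

Lemma state_distr_ge0 t s : 0 <= state_distr P d0 pi t s.
Proof.
elim: t s => [|t IH] s /=; first exact: Hd0.1.
apply: sumr_ge0 => s1 _; apply: sumr_ge0 => a _.
by rewrite !mulr_ge0 //; [exact: (Hpi s1).1 | exact: (HP s1 a).1].
Qed.

Lemma sum_state_distr t : \sum_s state_distr P d0 pi t s = 1.
Proof.
elim: t => [|t IH] /=; first exact: Hd0.2.
rewrite exchange_big /= -IH; apply: eq_bigr => s _.
rewrite exchange_big /= -[RHS]mulr1 -(Hpi s).2 mulr_sumr; apply: eq_bigr => a _.
by rewrite -mulr_sumr (HP s a).2 mulr1.
Qed.

Lemma sa_distr_ge0 t sa : 0 <= sa_distr P d0 pi t sa.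
Proof. by rewrite mulr_ge0 ?state_distr_ge0 //; case: sa => s a; exact: (Hpi s).1. Qed.

Lemma sum_sa_distr t : \sum_sa sa_distr P d0 pi t sa = 1.
Proof.
rewrite sum_pair -(sum_state_distr t); apply: eq_bigr => s _.
by rewrite /sa_distr /= -mulr_sumr (Hpi s).2 mulr1.
Qed.

Lemma sa_distr_le1 t sa : sa_distr P d0 pi t sa <= 1.
Proof.
rewrite -(sum_sa_distr t) (bigD1 sa) //= lerDl.
by apply: sumr_ge0 => i _; exact: sa_distr_ge0.
Qed.

Definition stage_value (f : {ffun S * A -> R}) t :=
  \sum_s state_distr P d0 pi t s * fpol f pi s.

Lemma stage_valueE f t : stage_value f t = \sum_sa sa_distr P d0 pi t sa * f sa.
Proof.
rewrite sum_pair; apply: eq_bigr => s _.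
by rewrite /fpol mulr_sumr; apply: eq_bigr => a _; rewrite /sa_distr /= mulrA.
Qed.

Lemma sum_sa_distr_next t (g : S -> R) :
  \sum_sa sa_distr P d0 pi t sa * (\sum_s' P sa.1 sa.2 s' * g s')
  = \sum_s' state_distr P d0 pi t.+1 s' * g s'.
Proof.
rewrite sum_pair /=.
under [RHS]eq_bigr do rewrite mulr_suml.
rewrite [RHS]exchange_big /=; apply: eq_bigr => s _.
under [RHS]eq_bigr do rewrite mulr_suml.
rewrite [RHS]exchange_big /=; apply: eq_bigr => a _.
by rewrite mulr_sumr; apply: eq_bigr => s' _; rewrite /sa_distr /= !mulrA.
Qed.

Lemma bellman_residual_stage (f : {ffun S * A -> R}) t :
  \sum_sa sa_distr P d0 pi t sa * (f sa - bellman Rw P gamma pi f sa)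
  = stage_value f t - \sum_sa sa_distr P d0 pi t sa * Rw sa.1 sa.2
    - gamma * stage_value f t.+1.
Proof.
rewrite stage_valueE /stage_value -(sum_sa_distr_next t (fpol f pi)) mulr_sumr -!sumrB.
by apply: eq_bigr => sa _; rewrite /bellman ffunE; ring.
Qed.

Definition disc_reward t :=
  gamma ^+ t * \sum_sa sa_distr P d0 pi t sa * Rw sa.1 sa.2.

Definition disc_visit (sa : S * A) t := gamma ^+ t * sa_distr P d0 pi t sa.

Lemma series_bellman_residual (f : {ffun S * A -> R}) N :
  series (fun t => gamma ^+ t *
     \sum_sa sa_distr P d0 pi t sa * (f sa - bellman Rw P gamma pi f sa)) N
  = stage_value f 0 - gamma ^+ N * stage_value f N - series disc_reward N.
Proof.
rewrite /series /=; elim: N => [|N IH].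
  by rewrite !big_geq // expr0 mul1r subrr sub0r oppr0.
by rewrite !big_nat_recr //= IH bellman_residual_stage /disc_reward exprS; ring.
Qed.

Lemma series_disc_sum (u : S * A -> R) N :
  series (fun t => gamma ^+ t * \sum_sa sa_distr P d0 pi t sa * u sa) N
  = \sum_sa u sa * series (disc_visit sa) N.
Proof.
rewrite /series /= /disc_visit.
under eq_bigr do rewrite mulr_sumr.
rewrite exchange_big /=; apply: eq_bigr => sa _.
by rewrite mulr_sumr; apply: eq_bigr => t _; ring.
Qed.

Lemma series_expr_le N : series (fun t => gamma ^+ t) N <= (1 - gamma)^-1.
Proof.
have gamma_lt1' : 0 < 1 - gamma by rewrite subr_gt0.
have telescope : (1 - gamma) * series (fun t => gamma ^+ t) N = 1 - gamma ^+ N.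
  rewrite /series /=; elim: N => [|N IH]; first by rewrite big_geq // expr0 mulr0 subrr.
  by rewrite big_nat_recr //= mulrDr IH exprS; ring.
by rewrite -[X in _ <= X]mulr1 ler_pdivlMl // telescope lerBlDr lerDl exprn_ge0.
Qed.

Lemma series_disc_visit_le (u : S * A -> R) N :
  (forall sa, 0 <= u sa <= 1) ->
  \sum_sa u sa * series (disc_visit sa) N <= (1 - gamma)^-1.
Proof.
move=> u01; rewrite -series_disc_sum; apply: le_trans (series_expr_le N).
rewrite /series /=; apply: ler_sum => t _.
rewrite -[X in _ <= X]mulr1 ler_wpM2l ?exprn_ge0 //.
rewrite -(sum_sa_distr t) ler_sum // => sa _.
have /andP [u0 u1] := u01 sa.
by rewrite -[X in _ <= X]mulr1 ler_wpM2l ?sa_distr_ge0.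
Qed.

Lemma disc_visit_ge0 sa t : 0 <= disc_visit sa t.
Proof. by rewrite mulr_ge0 ?exprn_ge0 ?sa_distr_ge0. Qed.

Lemma cvgn_disc_visit sa : cvgn (series (disc_visit sa)).
Proof.
apply: nondecreasing_is_cvgn.
  by apply: nondecreasing_series => t _ _; exact: disc_visit_ge0.
exists (1 - gamma)^-1 => _ [N _ <-].
have := series_disc_visit_le [ffun sa' => (sa' == sa)%:R] N.
rewrite (bigD1 sa) //= big1 => [|sa' /negbTE]; last by rewrite ffunE => ->; rewrite mul0r.
rewrite ffunE eqxx mul1r addr0; apply=> sa'; rewrite ffunE.
by case: (sa' == sa); rewrite ?lexx ?ler01.
Qed.

Lemma lim_disc_visit_ge0 sa : 0 <= limn (series (disc_visit sa)).
Proof.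
apply: le_trans (nondecreasing_cvgn_le _ (cvgn_disc_visit sa) 0).
  by rewrite /series /= big_geq.
by apply: nondecreasing_series => t _ _; exact: disc_visit_ge0.
Qed.

Lemma cvgn_sum_series_disc_visit (u : S * A -> R) :
  (\sum_sa u sa * series (disc_visit sa) N) @[N --> \oo] -->
  \sum_sa u sa * limn (series (disc_visit sa)).
Proof.
apply: cvg_big => [|sa _]; first exact: add_continuous.
exact: cvgMl_tmp (cvgn_disc_visit sa).
Qed.

Lemma abs_stage_value_le (f : {ffun S * A -> R}) t :
  `|stage_value f t| <= \sum_sa `|f sa|.
Proof.
rewrite stage_valueE; apply: le_trans (ler_norm_sum _ _ _) _.
apply: ler_sum => sa _; rewrite normrM (ger0_norm (sa_distr_ge0 _ _)).
by rewrite -[X in _ <= X]mul1r ler_wpM2r ?sa_distr_le1.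
Qed.

Lemma cvg_disc_stage_value (f : {ffun S * A -> R}) :
  (gamma ^+ N * stage_value f N) @[N --> \oo] --> (0 : R).
Proof.
have gamma_abs : `|gamma| < 1 by rewrite ger0_norm.
set M := \sum_sa `|f sa|.
apply: (@squeeze_cvgr _ _ _ _ (fun N => - M * gamma ^+ N) (fun N => M * gamma ^+ N)).
- apply: nearW => N.
  have : `|gamma ^+ N * stage_value f N| <= M * gamma ^+ N.
    by rewrite normrM ger0_norm ?exprn_ge0 // mulrC ler_wpM2r ?exprn_ge0 ?abs_stage_value_le.
  by rewrite ler_norml mulNr.
- by rewrite -(mulr0 (- M)); exact: cvgMl_tmp (cvg_expr gamma_abs).
- by rewrite -(mulr0 M); exact: cvgMl_tmp (cvg_expr gamma_abs).
Qed.

Lemma performance_difference (f : {ffun S * A -> R}) :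
  Jret Rw P d0 gamma pi = Jf d0 f pi -
    \sum_sa (f sa - bellman Rw P gamma pi f sa) * limn (series (disc_visit sa)).
Proof.
have partial_sums N : series disc_reward N = stage_value f 0 - gamma ^+ N * stage_value f N -
    \sum_sa (f sa - bellman Rw P gamma pi f sa) * series (disc_visit sa) N.
  by rewrite -series_disc_sum series_bellman_residual; ring.
apply: cvg_lim => //; rewrite (eq_cvg _ _ partial_sums).
have -> : Jf d0 f pi = stage_value f 0 - 0 by rewrite subr0.
apply: cvgB; first apply: cvgB; first exact: cvg_cst.
  exact: cvg_disc_stage_value.
exact: cvgn_sum_series_disc_visit.
Qed.

Lemma occupancy_ge0 sa : 0 <= occupancy P d0 gamma pi sa.
Proof. by rewrite mulr_ge0 ?lim_disc_visit_ge0 // subr_ge0 ltW. Qed.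

Lemma sum_occupancy_le1 : \sum_sa occupancy P d0 gamma pi sa <= 1.
Proof.
have gamma_lt1' : 0 < 1 - gamma by rewrite subr_gt0.
rewrite -mulr_sumr -ler_pdivlMl // mulr1.
have := cvgn_sum_series_disc_visit (fun=> 1); under eq_bigr do rewrite mul1r.
move=> /cvg_lim <- //; apply: limr_le; first by apply: cvgP (cvgn_sum_series_disc_visit _).
by apply: nearW => N; apply: series_disc_visit_le => sa; rewrite lexx ler01.
Qed.

End Occupancy.

Lemma abs_wsum_le_sqrt {R : realType} {I : finType} {w : I -> R} (u : I -> R) :
  (forall i, 0 <= w i) -> \sum_i w i <= 1 ->
  `|\sum_i w i * u i| <= Num.sqrt (\sum_i w i * u i ^+ 2).
Proof.
move=> w0 w1; set m := \sum_i w i * u i.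
have variance : \sum_i w i * (u i - m) ^+ 2 =
    \sum_i w i * u i ^+ 2 - 2 * m * m + m ^+ 2 * \sum_i w i.
  transitivity (\sum_i w i * u i ^+ 2 - \sum_i 2 * m * (w i * u i) + \sum_i m ^+ 2 * w i).
    by rewrite -sumrB -big_split /=; apply: eq_bigr => i _; ring.
  by rewrite -!mulr_sumr.
have : 0 <= \sum_i w i * (u i - m) ^+ 2.
  by apply: sumr_ge0 => i _; rewrite mulr_ge0 ?sqr_ge0.
have : m ^+ 2 * \sum_i w i <= m ^+ 2 by rewrite ler_piMr ?sqr_ge0.
rewrite variance -sqrtr_sqr ler_sqrt ?expr2 => [|*]; first lra.
by apply: sumr_ge0 => i _; rewrite mulr_ge0 ?sqr_ge0.
Qed.

Lemma occupancy_le_conc_coef {R : realType} {S A : finType} {P : S -> A -> S -> R}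
    {d0 : S -> R} {gamma : R} { pi : {ffun S * A -> R} } {dD : S * A -> R} :
  (forall sa, 0 <= dD sa) -> (conc_coef P d0 gamma pi dD < +oo)%E ->
  0 <= fine (conc_coef P d0 gamma pi dD) /\
  forall sa, occupancy P d0 gamma pi sa <= fine (conc_coef P d0 gamma pi dD) * dD sa.
Proof.
move=> dD_ge0; rewrite /conc_coef; case: ifP => [/forallP dD0_occ0 _|]; last by rewrite ltxx.
split=> [|sa]; first exact: bigmax_ge_id.
have [dD0|dD_neq0] := eqVneq (dD sa) 0.
  by move: (dD0_occ0 sa); rewrite dD0 eqxx mulr0 => /eqP ->.
rewrite -ler_pdivrMr ?lt0r ?dD_neq0 ?dD_ge0 //.
exact: (le_bigmax _ (fun sa => occupancy P d0 gamma pi sa / dD sa)).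
Qed.

Definition wsq_dist {R : realType} {T : finType} (d : T -> R) (f g : T -> R) :=
  \sum_t d t * (f t - g t) ^+ 2.

(* Combine the performance difference lemma with Cauchy-Schwarz under [d^pi]
   and the change of measure [d^pi <= C_pi d^D]. *)
Lemma value_estimate_error_le {R : realType} {S A : finType} (Rw : S -> A -> R)
    {P : S -> A -> S -> R} {d0 : S -> R} {gamma : R} { pi : {ffun S * A -> R} }
    {dD : S * A -> R} (f : {ffun S * A -> R}) :
  (forall s a, is_distr (P s a)) -> is_distr d0 -> is_policy pi ->
  0 <= gamma < 1 -> (forall sa, 0 <= dD sa) ->
  (conc_coef P d0 gamma pi dD < +oo)%E ->
  `|Jf d0 f pi - Jret Rw P d0 gamma pi| <=
   (1 - gamma)^-1 * Num.sqrt (fine (conc_coef P d0 gamma pi dD) *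
      wsq_dist dD f (bellman Rw P gamma pi f)).
Proof.
move=> HP Hd0 Hpi /andP [gamma_ge0 gamma_lt1] dD_ge0 conc_fin.
have gamma_lt1' : 0 < 1 - gamma by rewrite subr_gt0.
have [C_ge0 occ_le] := occupancy_le_conc_coef dD_ge0 conc_fin.
set C := fine _ in C_ge0 occ_le *.
set u := fun sa => f sa - bellman Rw P gamma pi f sa.
rewrite (performance_difference Rw HP Hd0 Hpi gamma_ge0 gamma_lt1 f) opprB addrC subrK.
rewrite [X in `|X|](_ : _ = (1 - gamma)^-1 * \sum_sa occupancy P d0 gamma pi sa * u sa).
  2: by rewrite mulr_sumr; apply: eq_bigr => sa _; rewrite /occupancy mulrA mulKf ?gt_eqF // mulrC.
have inv_ge0 : 0 <= (1 - gamma)^-1 by rewrite invr_ge0 ltW.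
rewrite normrM ger0_norm // ler_wpM2l //.
apply: le_trans (abs_wsum_le_sqrt u
  (occupancy_ge0 HP Hd0 Hpi gamma_ge0 gamma_lt1)
  (sum_occupancy_le1 HP Hd0 Hpi gamma_ge0 gamma_lt1)) _.
rewrite ler_sqrt; last by rewrite mulr_ge0 ?sumr_ge0 // => sa _; rewrite mulr_ge0 ?sqr_ge0.
by rewrite mulr_sumr ler_sum // => sa _; rewrite mulrA ler_wpM2r ?sqr_ge0.
Qed.

Section Bellman_fixed_point.
Context {R : realType} {S A : finType}.
Implicit Types f g : {ffun S * A -> R}.

Lemma fpol_bound {f pi : {ffun S * A -> R}} {V : R} : is_policy pi ->
  (forall sa, 0 <= f sa <= V) -> forall s, 0 <= fpol f pi s <= V.
Proof.
move=> Hpi f0V s; apply/andP; split.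
  by apply: sumr_ge0 => a _; rewrite mulr_ge0 //; [exact: (Hpi s).1 | case/andP: (f0V (s, a))].
rewrite -[V]mul1r -(Hpi s).2 mulr_suml; apply: ler_sum => a _.
by rewrite ler_wpM2l //; [exact: (Hpi s).1 | case/andP: (f0V (s, a))].
Qed.

Definition sup_dist f g := \big[Num.max/0]_sa `|f sa - g sa|.

Lemma sup_dist_ge0 f g : 0 <= sup_dist f g.
Proof. exact: bigmax_ge_id. Qed.

Lemma le_sup_dist f g sa : `|f sa - g sa| <= sup_dist f g.
Proof. exact: (le_bigmax _ (fun sa => `|f sa - g sa|)). Qed.

Lemma fpol_dist_le f g (pi : {ffun S * A -> R}) s : is_policy pi ->
  `|fpol f pi s - fpol g pi s| <= sup_dist f g.
Proof.
move=> Hpi; rewrite /fpol -sumrB; apply: le_trans (ler_norm_sum _ _ _) _.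
rewrite -[X in _ <= X]mul1r -(Hpi s).2 mulr_suml; apply: ler_sum => a _.
by rewrite -mulrBr normrM ger0_norm ?ler_wpM2l ?le_sup_dist //; exact: (Hpi s).1.
Qed.

Lemma bellman_contraction (Rw : S -> A -> R) (P : S -> A -> S -> R) gamma pi f g :
  (forall s a, is_distr (P s a)) -> is_policy pi -> 0 <= gamma ->
  sup_dist (bellman Rw P gamma pi f) (bellman Rw P gamma pi g) <= gamma * sup_dist f g.
Proof.
move=> HP Hpi gamma_ge0; apply: bigmax_le => [|[s a] _].
  by rewrite mulr_ge0 ?sup_dist_ge0.
rewrite !ffunE /= opprD addrACA subrr add0r -mulrBr -sumrB.
rewrite normrM ger0_norm // ler_wpM2l //; apply: le_trans (ler_norm_sum _ _ _) _.
rewrite -[X in _ <= X]mul1r -(HP s a).2 mulr_suml; apply: ler_sum => s' _.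
rewrite -mulrBr normrM ger0_norm ?ler_wpM2l ?fpol_dist_le //; exact: (HP s a).1.
Qed.

Lemma seq_argmin {T : eqType} {s : seq T} (phi : T -> R) :
  s != [::] -> exists2 x, x \in s & forall y, y \in s -> phi x <= phi y.
Proof.
elim: s => [//|k [|k2 s'] IH] _.
  by exists k; rewrite ?mem_head // => y; rewrite inE => /eqP ->.
have [x hx hmin] := IH isT.
have [phi_k|phi_x] := leP (phi k) (phi x).
  exists k; first exact: mem_head.
  by move=> y; rewrite inE => /orP [/eqP -> // | /hmin]; exact: le_trans.
exists x; first by rewrite inE hx orbT.
by move=> y; rewrite inE => /orP [/eqP -> | /hmin //]; exact: ltW.
Qed.

(* The element of least displacement cannot move at all. *)
Lemma bellman_fixed_point_in {Rw : S -> A -> R} {P : S -> A -> S -> R} {gamma : R}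
    { pi : {ffun S * A -> R} } {F : seq {ffun S * A -> R}} :
  (forall s a, is_distr (P s a)) -> is_policy pi -> 0 <= gamma < 1 ->
  F != [::] -> (forall f, f \in F -> bellman Rw P gamma pi f \in F) ->
  exists2 Q, Q \in F & bellman Rw P gamma pi Q = Q.
Proof.
move=> HP Hpi /andP [gamma_ge0 gamma_lt1] F_neq0 F_closed.
pose T := bellman Rw P gamma pi.
have [f fF f_min] := seq_argmin (fun f => sup_dist f (T f)) F_neq0.
exists f => //.
have : sup_dist f (T f) <= gamma * sup_dist f (T f).
  exact: le_trans (f_min _ (F_closed _ fF)) (bellman_contraction Rw P gamma pi f (T f) HP Hpi gamma_ge0).
have := sup_dist_ge0 f (T f) => dist_ge0 dist_le.
have dist_le0 : sup_dist f (T f) <= 0 by nra.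
apply/ffunP => sa; apply/eqP; rewrite eq_sym -subr_eq0 -normr_le0.
exact: le_trans (le_sup_dist _ _ sa) dist_le0.
Qed.

End Bellman_fixed_point.

(* The difference of the two squares factors as [(u - v) (u + v - 2 w)]. *)
Lemma sqr_subr_sqr_le {R : realFieldType} (V u v w : R) :
  0 <= u <= V -> 0 <= v <= V -> 0 <= w <= V ->
  ((u - w) ^+ 2 - (v - w) ^+ 2) ^+ 2 <= 4 * V ^+ 2 * (u - v) ^+ 2.
Proof.
move=> /andP [u0 uV] /andP [v0 vV] /andP [w0 wV].
have -> : (u - w) ^+ 2 - (v - w) ^+ 2 = (u - v) * (u + v - 2 * w) by ring.
rewrite exprMn mulrC ler_wpM2r ?sqr_ge0 //.
have : u + v - 2 * w <= 2 * V by lra.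
have : - (2 * V) <= u + v - 2 * w by lra.
rewrite !expr2; nra.
Qed.

Section Excess_loss.
Context {R : realType} {S A : finType}.
Variables (Rw : S -> A -> R) (P : S -> A -> S -> R) (gamma : R)
  (pi f h : {ffun S * A -> R}) (dD : S * A -> R).

Definition target (z : S * A * S) := Rw z.1.1 z.1.2 + gamma * fpol f pi z.2.

Definition excess_loss (z : S * A * S) :=
  (h (z.1.1, z.1.2) - target z) ^+ 2
  - (bellman Rw P gamma pi f (z.1.1, z.1.2) - target z) ^+ 2.

Definition transition_weight (z : S * A * S) := dD (z.1.1, z.1.2) * P z.1.1 z.1.2 z.2.

Lemma emp_loss_sub_bellman n (x : dataset S A n) :
  emp_loss Rw gamma x h f pi - emp_loss Rw gamma x (bellman Rw P gamma pi f) f pi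
  = n%:R^-1 * \sum_i excess_loss (x i).
Proof.
rewrite /emp_loss -mulrBr -sumrB; congr (_ * _); apply: eq_bigr => i _.
by rewrite /excess_loss /target; ring.
Qed.

Hypotheses (HP : forall s a, is_distr (P s a)) (HD : is_distr dD).

Lemma transition_weight_ge0 z : 0 <= transition_weight z.
Proof. by case: z => [[s a] s']; rewrite mulr_ge0 //; [exact: HD.1 | exact: (HP s a).1]. Qed.

Lemma sum_transition_weight : \sum_z transition_weight z = 1.
Proof.
rewrite sum_pair -HD.2; apply: eq_bigr => -[s a] _.
by rewrite /transition_weight /= -mulr_sumr (HP s a).2 mulr1.
Qed.

(* Conditionally on [(s, a)], the backup [T^pi f] is the mean of the target. *)
Lemma sum_excess_loss_next s a :
  \sum_s' P s a s' * excess_loss (s, a, s') = (h (s, a) - bellman Rw P gamma pi f (s, a)) ^+ 2.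
Proof.
set T := bellman Rw P gamma pi f (s, a).
have mean_target : \sum_s' P s a s' * target (s, a, s') = T.
  rewrite /T /bellman ffunE /= /target /=.
  under eq_bigr do rewrite mulrDr.
  rewrite big_split /= -mulr_suml (HP s a).2 mul1r mulr_sumr; congr (_ + _).
  by apply: eq_bigr => s' _; ring.
have -> : \sum_s' P s a s' * excess_loss (s, a, s') =
    \sum_s' (P s a s' * (h (s, a) ^+ 2 - T ^+ 2)
             - 2 * (h (s, a) - T) * (P s a s' * target (s, a, s'))).
  by apply: eq_bigr => s' _; rewrite /excess_loss /= -/T; ring.
by rewrite sumrB -mulr_suml -mulr_sumr mean_target (HP s a).2; ring.
Qed.

Lemma mean_excess_loss :
  \sum_z transition_weight z * excess_loss z = wsq_dist dD h (bellman Rw P gamma pi f).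
Proof.
rewrite sum_pair /wsq_dist; apply: eq_bigr => -[s a] _.
rewrite -sum_excess_loss_next mulr_sumr; apply: eq_bigr => s' _.
by rewrite /transition_weight /= mulrA.
Qed.

Variable V : R.
Hypotheses (h_bound : forall sa, 0 <= h sa <= V)
  (bellman_bound : forall sa, 0 <= bellman Rw P gamma pi f sa <= V)
  (target_bound : forall z, 0 <= target z <= V).

Lemma excess_loss_ge z : - V ^+ 2 <= excess_loss z.
Proof.
move: (bellman_bound (z.1.1, z.1.2)) (target_bound z) => /andP [T0 TV] /andP [y0 yV].
have := sqr_ge0 (h (z.1.1, z.1.2) - target z).
rewrite /excess_loss !expr2; nra.
Qed.

Lemma excess_loss_sq_le :
  \sum_z transition_weight z * excess_loss z ^+ 2
  <= 4 * V ^+ 2 * \sum_z transition_weight z * excess_loss z.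
Proof.
rewrite mean_excess_loss /wsq_dist mulr_sumr sum_pair; apply: ler_sum => -[s a] _.
set T := bellman Rw P gamma pi f (s, a).
have -> : 4 * V ^+ 2 * (dD (s, a) * (h (s, a) - T) ^+ 2)
    = \sum_s' transition_weight (s, a, s') * (4 * V ^+ 2 * (h (s, a) - T) ^+ 2).
  by rewrite -mulr_suml /transition_weight /= -mulr_sumr (HP s a).2 mulr1; ring.
apply: ler_sum => s' _; rewrite ler_wpM2l ?transition_weight_ge0 //.
exact: sqr_subr_sqr_le (h_bound (s, a)) (bellman_bound (s, a)) (target_bound (s, a, s')).
Qed.

Lemma excess_loss_tail n L : 0 <= V ->
  \sum_(x : dataset S A n |
         \sum_i excess_loss (x i) < n%:R * wsq_dist dD h (bellman Rw P gamma pi f) / 2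
                                    - 16 * V ^+ 2 * L)
     data_prob P dD x <= expR (- L).
Proof.
move=> V_ge0; have [V0|V_neq0] := eqVneq V 0.
  have excess0 z : excess_loss z = 0.
    move: (bellman_bound (z.1.1, z.1.2)) (target_bound z) (h_bound (z.1.1, z.1.2)).
    by rewrite V0 /excess_loss => /andP [? ?] /andP [? ?] /andP [? ?]; nra.
  rewrite big_pred0 ?expR_ge0 // => x.
  rewrite -mean_excess_loss !big1 => [|z _|i _]; rewrite ?excess0 ?mulr0 //.
  by rewrite V0 expr0n !(mulr0, mul0r) subrr ltxx.
have Vsq_gt0 : 0 < V ^+ 2 by rewrite exprn_gt0 // lt0r V_neq0.
have := chernoff_lower_tail transition_weight_ge0 sum_transition_weight Vsq_gt0
  excess_loss_ge excess_loss_sq_le n L.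
by rewrite mean_excess_loss.
Qed.

End Excess_loss.

Lemma union_bound {R : realType} {X : finType} {E : Type} (s : seq E)
    (B : E -> pred X) {p : X -> R} :
  (forall x, 0 <= p x) ->
  \sum_(x | has (B^~ x) s) p x <= \sum_(e <- s) \sum_(x | B e x) p x.
Proof.
move=> p_ge0; elim: s => [|e s IH]; first by rewrite big_nil big_pred0.
rewrite big_cons; apply: le_trans (lerD (lexx _) IH).
rewrite [X in _ <= X + _]big_mkcond [X in _ <= _ + X]big_mkcond -big_split /=.
rewrite [X in X <= _]big_mkcond.
apply: ler_sum => x _; case: (B e x); case: (has _ s) => /=;
  by rewrite ?addr0 ?add0r ?lerDl ?lexx.
Qed.

Lemma sum_data_prob {R : realType} {S A : finType} {P : S -> A -> S -> R}
    {dD : S * A -> R} n :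
  (forall s a, is_distr (P s a)) -> is_distr dD ->
  \sum_(x : dataset S A n) data_prob P dD x = 1.
Proof.
move=> HP HD; have := @sum_ffun_prod R _ n (transition_weight P dD).
by rewrite sum_transition_weight // expr1n.
Qed.

Section Finite_class_guarantee.
Context {R : realType} {S A : finType} {Rw : S -> A -> R} {Rmax : R}
  {P : S -> A -> S -> R} {gamma : R} {d0 : S -> R} {dD : S * A -> R}
  {F Pi : seq {ffun S * A -> R}} {n : nat} {delta : R}.
Hypotheses (Rw_bound : forall s a, 0 <= Rw s a <= Rmax)
  (HP : forall s a, is_distr (P s a)) (gamma01 : 0 <= gamma < 1)
  (Hd0 : is_distr d0) (HD : is_distr dD)
  (F_bound : forall f, f \in F -> forall sa, 0 <= f sa <= Rmax / (1 - gamma))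
  (Pi_policy : forall pi, pi \in Pi -> is_policy pi)
  (F_closed : forall pi, pi \in Pi -> forall f, f \in F -> bellman Rw P gamma pi f \in F)
  (conc_fin : forall pi, pi \in Pi -> (conc_coef P d0 gamma pi dD < +oo)%E)
  (n_gt0 : (0 < n)%N) (delta01 : 0 < delta < 1).

Local Notation V := (Rmax / (1 - gamma)).
Local Notation T pi := (bellman Rw P gamma pi).
Local Notation Cmax := (\big[Num.max/0]_(pi <- Pi) fine (conc_coef P d0 gamma pi dD)).
Local Notation logFPi := (ln ((size F)%:R * (size Pi)%:R / delta)).

(* One union bound covers the triples [(pi, f, h)] with [pi \in Pi], [f, h \in F]. *)
Let m : R := (size F)%:R * (size F)%:R * (size Pi)%:R.
Let L := ln (m / delta).
Let K := 16 * V ^+ 2 * L / n%:R.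

Let triples := [seq (pf, h) | pf <- [seq (pi, f) | pi <- Pi, f <- F], h <- F].

Let bad (e : {ffun S * A -> R} * {ffun S * A -> R} * {ffun S * A -> R})
    (x : dataset S A n) :=
  \sum_i excess_loss Rw P gamma e.1.1 e.1.2 e.2 (x i)
  < n%:R * wsq_dist dD e.2 (T e.1.1 e.1.2) / 2 - 16 * V ^+ 2 * L.

Let good (x : dataset S A n) := ~~ has (bad^~ x) triples.

Let gamma_lt1' : 0 < 1 - gamma.
Proof. by case/andP: gamma01 => _; rewrite subr_gt0. Qed.

Let V_ge0 : 0 <= V.
Proof.
have [sa _] : exists sa : S * A, true.
  case: (pickP (fun _ : S * A => true)) => [sa _|none]; first by exists sa.
  by move: HD.2; rewrite big_pred0 // => /eqP; rewrite eq_sym oner_eq0.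
rewrite divr_ge0 ?(ltW gamma_lt1') //.
by case/andP: (Rw_bound sa.1 sa.2); exact: le_trans.
Qed.

Lemma target_bound pi f : pi \in Pi -> f \in F ->
  forall z, 0 <= target Rw gamma pi f z <= V.
Proof.
move=> piPi fF z; case/andP: gamma01 => gamma_ge0 gamma_lt1.
have /andP [f0 fV] := fpol_bound (Pi_policy _ piPi) (F_bound _ fF) z.2.
have /andP [r0 rRmax] := Rw_bound z.1.1 z.1.2.
have Rmax_eq : Rmax = V * (1 - gamma) by rewrite mulfVK ?gt_eqF.
have : gamma * fpol f pi z.2 <= gamma * V by rewrite ler_wpM2l.
have : 0 <= gamma * fpol f pi z.2 by rewrite mulr_ge0.
rewrite /target; lra.
Qed.

Lemma log_bounds {f pi : {ffun S * A -> R}} : pi \in Pi -> f \in F ->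
  0 <= logFPi /\ 0 <= L <= 2 * logFPi.
Proof.
move=> piPi fF; case/andP: delta01 => delta_gt0 delta_lt1.
have sF : 1 <= (size F)%:R :> R by rewrite ler1n; case: (F) fF.
have sPi : 1 <= (size Pi)%:R :> R by rewrite ler1n; case: (Pi) piPi.
have Pi_delta : 1 <= (size Pi)%:R / delta by rewrite ler_pdivlMr // mul1r; lra.
have F_le : (size F)%:R <= (size F)%:R * (size Pi)%:R / delta.
  by rewrite -mulrA ler_peMr // (le_trans ler01).
have L_split : L = ln (size F)%:R + logFPi.
  rewrite /L -lnM ?posrE ?(lt_le_trans ltr01) //; last exact: le_trans F_le.
  by rewrite /m -!mulrA.
have lnF_ge0 : 0 <= ln ((size F)%:R : R) by rewrite ln_ge0.
have lnF_le : ln ((size F)%:R : R) <= logFPi.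
  by rewrite ler_ln ?posrE ?(lt_le_trans ltr01) //; exact: le_trans F_le.
rewrite L_split; split; first exact: le_trans lnF_le.
by apply/andP; split; lra.
Qed.

Lemma good_prob : 1 - delta <= \sum_(x | good x) data_prob P dD x.
Proof.
case/andP: delta01 => delta_gt0 delta_lt1.
have p_ge0 (x : dataset S A n) : 0 <= data_prob P dD x.
  by apply: prodr_ge0 => i _; exact: transition_weight_ge0.
have bad_prob_le e : e \in triples -> \sum_(x | bad e x) data_prob P dD x <= delta / m.
  case/allpairsP => -[pf h] [/allpairsP [[pi f] [piPi fF ->]] hF ->] /=.
  have m_ge1 : 1 <= m.
    have sF : (0 < size F)%N by case: (F) fF.
    have sPi : (0 < size Pi)%N by case: (Pi) piPi.
    by rewrite /m -!natrM ler1n !muln_gt0 sF sPi.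
  have m_gt0 : 0 < m by exact: lt_le_trans ltr01 m_ge1.
  have -> : delta / m = expR (- L) by rewrite expRN lnK ?invf_div // posrE divr_gt0.
  apply: excess_loss_tail => //; [exact: F_bound | | exact: target_bound].
  by move=> sa; apply: F_bound => //; exact: F_closed.
have size_triples : (size triples)%:R = m.
  by rewrite !size_allpairs /m -!natrM [in RHS]mulnC mulnA.
have bad_le : \sum_(x | ~~ good x) data_prob P dD x <= delta.
  under eq_bigl do rewrite negbK.
  apply: le_trans (union_bound triples bad p_ge0) _.
  rewrite big_seq; apply: le_trans (ler_sum _ bad_prob_le) _.
  rewrite -big_seq big_const_seq count_predT iter_addr_0 -mulr_natr size_triples.
  have [->|m_neq0] := eqVneq m 0; first by rewrite mulr0 ltW.
  by rewrite mulfVK.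
have := sum_data_prob n HP HD; rewrite (bigID good) /=; lra.
Qed.

Section Good_sample.
Context {x : dataset S A n} { pi : {ffun S * A -> R} }.
Hypotheses (x_good : good x) (piPi : pi \in Pi).

Let bad_free {f h : {ffun S * A -> R}} : f \in F -> h \in F ->
  n%:R * wsq_dist dD h (T pi f) / 2 - 16 * V ^+ 2 * L
  <= \sum_i excess_loss Rw P gamma pi f h (x i).
Proof.
move=> fF hF; rewrite leNgt; apply: contraNN x_good => bad_x; apply/hasP.
exists ((pi, f), h) => //; apply/allpairsP; exists ((pi, f), h); split=> //.
by apply/allpairsP; exists (pi, f).
Qed.

Let mean_bad_free {f h : {ffun S * A -> R}} : f \in F -> h \in F ->
  wsq_dist dD h (T pi f) / 2 - K <= emp_loss Rw gamma x h f pi - emp_loss Rw gamma x (T pi f) f pi.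
Proof.
move=> fF hF; rewrite emp_loss_sub_bellman.
have -> : wsq_dist dD h (T pi f) / 2 - K =
    n%:R^-1 * (n%:R * wsq_dist dD h (T pi f) / 2 - 16 * V ^+ 2 * L).
  by rewrite /K; field; rewrite !gt_eqF ?ltr0n.
by rewrite ler_wpM2l ?invr_ge0 ?ler0n ?bad_free.
Qed.

Lemma emp_err_fixed_point_le {Q : {ffun S * A -> R}} : Q \in F -> T pi Q = Q -> emp_err Rw gamma x F Q pi <= K.
Proof.
move=> QF QT; have [_ /andP [L_ge0 _]] := log_bounds piPi QF.
have K_ge0 : 0 <= K by rewrite /K divr_ge0 ?ler0n // mulr_ge0 // mulr_ge0 ?sqr_ge0.
rewrite /emp_err big_seq; apply: bigmax_le => // g gF.
have := mean_bad_free QF gF; rewrite QT.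
have : 0 <= wsq_dist dD g Q by apply: sumr_ge0 => sa _; rewrite mulr_ge0 ?sqr_ge0 ?HD.1.
lra.
Qed.

Lemma emp_err_ge {f : {ffun S * A -> R}} : f \in F -> wsq_dist dD f (T pi f) / 2 - K <= emp_err Rw gamma x F f pi.
Proof.
move=> fF; apply: le_trans (mean_bad_free fF fF) _.
exact: le_bigmax_seq (F_closed _ piPi _ fF) _.
Qed.

Lemma minimizer_wsq_dist_le {f : {ffun S * A -> R}} : f \in F ->
  (forall g, g \in F -> emp_err Rw gamma x F f pi <= emp_err Rw gamma x F g pi) ->
  wsq_dist dD f (T pi f) <= 4 * K.
Proof.
move=> fF f_min; have [pi_policy gamma_lt1] := (Pi_policy _ piPi, gamma01).
have F_neq0 : F != [::] by case: (F) fF.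
have [Q QF QT] := bellman_fixed_point_in HP pi_policy gamma01 F_neq0 (F_closed _ piPi).
have := le_trans (emp_err_ge fF) (le_trans (f_min _ QF) (emp_err_fixed_point_le QF QT)).
lra.
Qed.
Lemma good_value_estimate_le {f : {ffun S * A -> R}} : f \in F ->
  (forall g, g \in F -> emp_err Rw gamma x F f pi <= emp_err Rw gamma x F g pi) ->
  `|Jf d0 f pi - Jret Rw P d0 gamma pi|
  <= (1 - gamma)^-1 * (16 * V * Num.sqrt (Cmax * logFPi / n%:R)).
Proof.
move=> fF f_min; have Hpi := Pi_policy _ piPi.
apply: le_trans (value_estimate_error_le Rw f HP Hd0 Hpi gamma01 HD.1 (conc_fin _ piPi)) _.
rewrite ler_wpM2l ?invr_ge0 ?(ltW gamma_lt1') //.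
have [C_ge0 _] := occupancy_le_conc_coef HD.1 (conc_fin _ piPi).
have C_le : fine (conc_coef P d0 gamma pi dD) <= Cmax.
  exact: le_bigmax_seq piPi _.
have [logFPi_ge0 /andP [L_ge0 L_le]] := log_bounds piPi fF.
have wsq_ge0 : 0 <= wsq_dist dD f (T pi f).
  by apply: sumr_ge0 => sa _; rewrite mulr_ge0 ?sqr_ge0 ?HD.1.
have Cmax_ge0 : 0 <= Cmax := le_trans C_ge0 C_le.
have -> : 16 * V * Num.sqrt (Cmax * logFPi / n%:R)
    = Num.sqrt ((16 * V) ^+ 2 * (Cmax * logFPi / n%:R)).
  by rewrite [RHS]sqrtrM ?sqr_ge0 // sqrtr_sqr ger0_norm // mulr_ge0.
rewrite ler_sqrt; last first.
  by rewrite mulr_ge0 ?sqr_ge0 // divr_ge0 ?ler0n ?mulr_ge0.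
apply: le_trans (_ : Cmax * (4 * K) <= _).
  by rewrite ler_pM ?minimizer_wsq_dist_le.
have -> : Cmax * (4 * K) = V ^+ 2 * Cmax / n%:R * (64 * L) by rewrite /K; ring.
have -> : (16 * V) ^+ 2 * (Cmax * logFPi / n%:R) = V ^+ 2 * Cmax / n%:R * (256 * logFPi).
  by ring.
apply: ler_wpM2l; last lra.
by rewrite divr_ge0 ?ler0n // mulr_ge0 ?sqr_ge0.
Qed.

End Good_sample.

Lemma finite_class_guarantee
    {fhat : dataset S A n -> {ffun S * A -> R} -> {ffun S * A -> R}}
    {pihat : dataset S A n -> {ffun S * A -> R}} :
  (forall x pi, pi \in Pi ->
      fhat x pi \in F /\
      forall f, f \in F -> emp_err Rw gamma x F (fhat x pi) pi <= emp_err Rw gamma x F f pi) ->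
  (forall x, pihat x \in Pi /\
      forall pi, pi \in Pi -> Jf d0 (fhat x pi) pi <= Jf d0 (fhat x (pihat x)) (pihat x)) ->
  1 - delta <= \sum_(x : dataset S A n |
      all (fun pi_cp : {ffun S * A -> R} =>
         Jret Rw P d0 gamma pi_cp - Jret Rw P d0 gamma (pihat x)
         <= 32%:R * (V / (1 - gamma)) * Num.sqrt (Cmax * logFPi / n%:R)) Pi)
    data_prob P dD x.
Proof.
move=> fhat_min pihat_max; apply: le_trans good_prob _.
rewrite big_mkcond (big_mkcond (fun x => all _ Pi)); apply: ler_sum => x _.
have p_ge0 : 0 <= data_prob P dD x by apply: prodr_ge0 => i _; exact: transition_weight_ge0.
case: ifP => x_good; case: ifPn => // /negP[].
apply/allP => pi_cp pi_cpPi.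
have [pihatPi pihat_ge] := pihat_max x.
have estimate pi : pi \in Pi -> `|Jf d0 (fhat x pi) pi - Jret Rw P d0 gamma pi|
    <= (1 - gamma)^-1 * (16 * V * Num.sqrt (Cmax * logFPi / n%:R)).
  by move=> piPi; have [fF f_min] := fhat_min x pi piPi; exact: (good_value_estimate_le x_good piPi fF f_min).
move: (estimate _ pi_cpPi) (estimate _ pihatPi) (pihat_ge _ pi_cpPi).
rewrite !ler_norml => /andP [cp_ge _] /andP [_ hat_le].
set E := (1 - gamma)^-1 * _ in cp_ge hat_le *.
have -> : 32%:R * (V / (1 - gamma)) * Num.sqrt (Cmax * logFPi / n%:R) = 2 * E.
  by rewrite /E; ring.
lra.
Qed.

End Finite_class_guarantee.

Theorem theorem1 :
  exists c : nat, (0 < c)%N /\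
  forall (R : realType) (S A : finType)
    (Rw : S -> A -> R) (Rmax : R) (P : S -> A -> S -> R) (gamma : R)
    (d0 : S -> R) (dD : S * A -> R)
    (F : seq {ffun S * A -> R}) (Pi : seq {ffun S * A -> R})
    (n : nat) (delta : R),
    (forall s a, 0 <= Rw s a <= Rmax) ->
    (forall s a, is_distr (P s a)) ->
    0 <= gamma < 1 ->
    is_distr d0 ->
    is_distr dD ->
    uniq F -> uniq Pi ->
    (forall f, f \in F -> forall sa, 0 <= f sa <= Rmax / (1 - gamma)) ->
    (forall pi, pi \in Pi -> is_policy pi) ->
    (forall pi, pi \in Pi -> forall f, f \in F -> bellman Rw P gamma pi f \in F) ->
    (forall pi, pi \in Pi -> (conc_coef P d0 gamma pi dD < +oo)%E) ->
    (0 < n)%N ->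
    0 < delta < 1 ->
    forall (fhat : dataset S A n -> {ffun S * A -> R} -> {ffun S * A -> R})
           (pihat : dataset S A n -> {ffun S * A -> R}),
    (forall x pi, pi \in Pi ->
        fhat x pi \in F /\
        forall f, f \in F -> emp_err Rw gamma x F (fhat x pi) pi <= emp_err Rw gamma x F f pi) ->
    (forall x, pihat x \in Pi /\
        forall pi, pi \in Pi -> Jf d0 (fhat x pi) pi <= Jf d0 (fhat x (pihat x)) (pihat x)) ->
    let Cmax := \big[Num.max/0]_(pi <- Pi) fine (conc_coef P d0 gamma pi dD) in
    \sum_(x : dataset S A n |
           all (fun pi_cp : {ffun S * A -> R} =>
              (Jret Rw P d0 gamma pi_cp - Jret Rw P d0 gamma (pihat x)
                <= c%:R * ((Rmax / (1 - gamma)) / (1 - gamma)) *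
                   Num.sqrt (Cmax * ln ((size F)%:R * (size Pi)%:R / delta) / n%:R))) Pi)
      data_prob P dD x
    >= 1 - delta.
Proof.
exists 32%N; split=> // R S A Rw Rmax P gamma d0 dD F Pi n delta.
move=> Rw_bound HP gamma01 Hd0 HD _ _ F_bound Pi_policy F_closed conc_fin n_gt0 delta01.
move=> fhat pihat fhat_min pihat_max.
exact: (finite_class_guarantee Rw_bound HP gamma01 Hd0 HD F_bound Pi_policy F_closed
  conc_fin n_gt0 delta01 fhat_min pihat_max).
Qed.
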